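(* Let $N\ge 1$ be an integer, and let $1\le r\le N+1$ and $0\le i\le r$ be integers. Then \[ a^{(\lambda)}_{i,r-i}(N+1,x)=(-1)^{N+1+i-r}\, i!\, S_{1,i-1}(r-i)\, N!\, H_{N,r-1}\,(x)_{r-i}. \]
   Context: Let $x$ be a variable. $(x)_0=1$ and $(x)_n=x(x-1)\cdots(x-n+1)$ for $n\ge1$ (falling factorial). Generalized harmonic numbers: $H_{N,0}=1$ for all integers $N\ge 0$; $H_{N,1}=1+\frac12+\cdots+\frac1N$ for $N\ge1$; and for $2\le j\le N$, \[H_{N,j}=\frac{H_{N-1,j-1}}{N}+\frac{H_{N-2,j-1}}{N-1}+\cdots+\frac{H_{j-1,j-1}}{j}.\] Generalized Changhee power sums (for $k=1$), for integers $N\ge0$: $S_{1,-1}(N)=1$, $S_{1,0}(N)=N+1$, $S_{1,j}(N)=\sum_{l=0}^{N}S_{1,j-1}(l)$ for $j\ge1$. The coefficients $a^{(\lambda)}_{i,j}(N,x)$ (polynomials in $x$, indexed by integers $N\ge1$ and $i,j\ge0$ with $1\le i+j\le N$) are defined recursively by $a^{(\lambda)}_{1,0}(1,x)=-1$, $a^{(\lambda)}_{0,1}(1,x)=x$, and for $N\ge1$, $i,j\ge0$, $1\le i+j\le N+1$: \[ a^{(\lambda)}_{i,j}(N+1,x)=-N\,a^{(\lambda)}_{i,j}(N,x)-i\,a^{(\lambda)}_{i-1,j}(N,x)+(x-j+1)\,a^{(\lambda)}_{i,j-1}(N,x), \] with the convention that $a^{(\lambda)}_{i,j}(N,x)=0$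 whenever $i<0$, $j<0$, $i+j=0$, or $i+j>N$. (These are exactly the coefficients arising from repeatedly differentiating $F(t;x,\lambda)=\frac{2\lambda}{2\lambda+\log(1+\lambda t)}\bigl(1+\lambda^{-1}\log(1+\lambda t)\bigr)^x$ in the form $F^{(N)}=\lambda^N(1+\lambda t)^{-N}\sum_{1\le i+j\le N}a^{(\lambda)}_{i,j}(N,x)(2\lambda+\log(1+\lambda t))^{-i}(\lambda+\log(1+\lambda t))^{-j}F$.) *)

From HB Require Import structures.
From mathcomp Require Import all_boot all_order all_algebra.
Set Implicit Arguments. Unset Strict Implicit. Unset Printing Implicit Defensive.
Import Order.TTheory GRing.Theory Num.Theory.
Local Open Scope ring_scope.

Definition falling (n : nat) : {poly rat} := \prod_(k < n) ('X - (k%:R)%:P).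

(* Generalized harmonic numbers: harm j N = H_{N,j}
   (H_{N,0} = 1, H_{N,j} = sum_{m=j}^{N} H_{m-1,j-1}/m for j >= 1;
    for j = 1 this is 1 + 1/2 + ... + 1/N). *)
Fixpoint harm (j N : nat) : rat :=
  match j with
  | 0 => 1
  | j'.+1 => \sum_(j'.+1 <= m < N.+1) harm j' m.-1 / m%:R
  end.

(* Changhee power sums, shifted index: Sch k N = S_{1,k-1}(N)
   (S_{1,-1}(N) = 1, S_{1,j}(N) = sum_{l=0}^{N} S_{1,j-1}(l)). *)
Fixpoint Sch (k N : nat) : nat :=
  match k with
  | 0 => 1%N
  | k'.+1 => (\sum_(0 <= l < N.+1) Sch k' l)%N
  end.

(* a n i j = a^{(lambda)}_{i,j}(n, x) as a polynomial in x = 'X;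
   zero outside 1 <= i + j <= n (and for n = 0). *)
Fixpoint acoef (n i j : nat) : {poly rat} :=
  match n with
  | 0 => 0
  | n'.+1 =>
    if (1 <= i + j <= n)%N then
      match n' with
      | 0 =>
        if (i == 1%N) && (j == 0%N) then -1
        else if (i == 0%N) && (j == 1%N) then 'X else 0
      | _ =>
        - (n'%:R) *: acoef n' i j
        - (i%:R) *: (if i is i'.+1 then acoef n' i' j else 0)
        + ('X - (j%:R)%:P + 1) * (if j is j'.+1 then acoef n' i j' else 0)
      end
    else 0
  end.

(* The closed form is read off a coefficient recurrence.  Writing
   a_{i,j}(N+1,x) = c_N(i,j) (x)_j, the factor (x - j + 1) in the defining
   recurrence turns (x)_{j-1} into (x)_j, so the polynomial recurrence becomes
   c_{N+1}(i,j) = -(N+1) c_N(i,j) - i c_N(i-1,j) + c_N(i,j-1).  The claimed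
   c_N(i,j) = (-1)^{N+1+j} i! S_{1,i-1}(j) N! H_{N,i+j-1} satisfies it because
   (N+1)! H_{N+1,k+1} = (N+1) N! H_{N,k+1} + N! H_{N,k} and
   S_{1,i-1}(j) = S_{1,i-2}(j) + S_{1,i-1}(j-1). *)
From HB Require Import structures.
From mathcomp Require Import all_boot all_order all_algebra.
From mathcomp Require Import ring zify.
Import Order.TTheory GRing.Theory Num.Theory.
Local Open Scope ring_scope.

Lemma harm_gt (k N : nat) : (N < k)%N -> harm k N = 0.
Proof. by case: k => [//|k] ltNk /=; rewrite big_geq. Qed.

Lemma harmSS (k N : nat) : harm k.+1 N.+1 = harm k.+1 N + harm k N / N.+1%:R.
Proof.
rewrite /=; case: (leqP k.+1 N.+1) => [le_kN|lt_Nk]; first by rewrite big_nat_recr.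
by rewrite !big_geq ?harm_gt ?mul0r ?addr0 // ltnW.
Qed.

Lemma Sch0n (j : nat) : Sch 0 j = 1%N.
Proof. by []. Qed.

Lemma Schn0 (i : nat) : Sch i 0 = 1%N.
Proof. by elim: i => [//|i IHi]; rewrite /= big_nat1. Qed.

Lemma SchSS (i j : nat) : Sch i.+1 j.+1 = (Sch i.+1 j + Sch i j.+1)%N.
Proof. by rewrite [Sch i.+1 j.+1]/= big_nat_recr. Qed.

Lemma fallingS (j : nat) : falling j.+1 = falling j * ('X - (j%:R)%:P).
Proof. by rewrite /falling big_ord_recr. Qed.

Lemma scale_fallingS (c : rat) (j : nat) :
  ('X - (j.+1%:R)%:P + 1) * (c *: falling j) = c *: falling j.+1.
Proof.
rewrite fallingS -scalerAr mulrC; congr (_ *: (_ * _)).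
by rewrite -natr1 rmorphD rmorph1 /=; ring.
Qed.

Lemma signr_subn (m n : nat) : (n <= m)%N -> (-1) ^+ (m - n) = (-1) ^+ (m + n) :> rat.
Proof. by move=> le_nm; rewrite -signr_odd -[RHS]signr_odd oddB // oddD. Qed.

(* [acoef_closed N i j] is c_N(i,j); the value 0 at i + j = 0 makes the
   coefficient recurrence hold down to i + j = 1, where acoef N i j vanishes. *)
Definition acoef_closed (N i j : nat) : rat :=
  if (i + j)%N is k.+1 then
    (-1) ^+ (N.+1 + j) * (i`!)%:R * (Sch i j)%:R * (N`!)%:R * harm k N
  else 0.

Lemma acoef_closed_gt (N i j : nat) : (N.+1 < i + j)%N -> acoef_closed N i j = 0.
Proof.
rewrite /acoef_closed; case: (i + j)%N => [//|k] ltNk.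
by rewrite harm_gt ?mulr0.
Qed.

Lemma acoef_closedS (N i j : nat) : (0 < i + j)%N ->
  acoef_closed N.+1 i j =
    - N.+1%:R * acoef_closed N i j
    - i%:R * (if i is i'.+1 then acoef_closed N i' j else 0)
    + (if j is j'.+1 then acoef_closed N i j' else 0).
Proof.
have NS_neq0 : 1 + N%:R != 0 :> rat by rewrite addrC natr1 pnatr_eq0.
case: i => [|[|i]]; case: j => [|[|j]] // _;
  rewrite /acoef_closed ?addn0 ?add0n ?addSn ?addnS; cbv beta iota;
  rewrite ?harmSS ?addn0 ?add0n ?SchSS ?Schn0 ?Sch0n ?exprS ?factS ?fact0 ?natrM ?natrD;
  by field; rewrite ?NS_neq0.
Qed.

Lemma acoef1 (i j : nat) : acoef 1 i j = acoef_closed 0 i j *: falling j.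
Proof.
case: i => [|[|i]]; case: j => [|[|j]] //; try by rewrite acoef_closed_gt ?scale0r.
- by rewrite /acoef_closed scale0r.
- by rewrite /acoef_closed /falling big_ord_recr big_ord0 /= expr2 mulN1r opprK !mulr1
    mul1r subr0 scale1r.
- by rewrite /acoef_closed /falling big_ord0 /= big_nat1 !mulr1 scaleN1r.
Qed.

Lemma acoefSS (N i j : nat) : acoef N.+2 i j =
  if (1 <= i + j <= N.+2)%N then
    - N.+1%:R *: acoef N.+1 i j
    - i%:R *: (if i is i'.+1 then acoef N.+1 i' j else 0)
    + ('X - (j%:R)%:P + 1) * (if j is j'.+1 then acoef N.+1 i j' else 0)
  else 0.
Proof. by []. Qed.

Lemma acoefE (N i j : nat) : acoef N.+1 i j = acoef_closed N i j *: falling j.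
Proof.
elim: N i j => [|N IHN] i j; first exact: acoef1.
rewrite acoefSS; case: ifP => [/andP[ij_gt0 ij_le]|ij_out]; last first.
  case: (posnP (i + j)) => [ij0|ij_gt0]; first by rewrite /acoef_closed ij0 scale0r.
  by rewrite acoef_closed_gt ?scale0r //; move: ij_out; rewrite ij_gt0 /=; lia.
rewrite (acoef_closedS N i j ij_gt0) !scalerDl IHN scalerA scaleNr.
congr (_ - _ + _).
  by case: i {ij_gt0 ij_le} => [|i]; rewrite ?mulr0 ?scale0r ?scaler0 // IHN scalerA.
by case: j {ij_gt0 ij_le} => [|j]; rewrite ?mulr0 ?scale0r // IHN scale_fallingS.
Qed.

Theorem theorem2 (N r i : nat) :
  (1 <= N)%N -> (1 <= r <= N.+1)%N -> (i <= r)%N ->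
  acoef N.+1 i (r - i) =
  ((-1) ^+ (N.+1 + i - r) * (i`!)%:R * (Sch i (r - i))%:R * (N`!)%:R
     * harm (r - 1) N) *: falling (r - i).
Proof.
move=> _ /andP[r_gt0 le_rN] le_ir.
rewrite acoefE /acoef_closed subnKC //; case: r r_gt0 le_rN le_ir => [//|r] _ le_rN le_ir.
have -> : (N.+1 + i - r.+1 = N.+1 - (r.+1 - i))%N by lia.
by rewrite subn1 signr_subn //; lia.
Qed.
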